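(* Let $P, Q \subseteq \mathbb{R}^d$ be full-dimensional semi-rational polytopes such that $L_{P+w}(s) = L_{Q+w}(s)$ for all $w \in \mathbb{Z}^d$ and all real $s > 0$. Then $P = Q$.
   Context: For a polytope $P \subseteq \mathbb{R}^d$ and real $s \ge 0$, $L_P(s) = \#(sP \cap \mathbb{Z}^d)$, where $sP = \{sx : x \in P\}$. A polytope is semi-rational if it can be written as $\bigcap_{i=1}^n \{x \in \mathbb{R}^d : \langle a_i, x\rangle \le b_i\}$ with all $a_i \in \mathbb{Z}^d$ and all $b_i \in \mathbb{R}$. *)

From mathcomp Require Import ssreflect ssrfun ssrbool eqtype ssrnat seq fintype.
From Stdlib Require Import Reals ZArith List.
Set Implicit Arguments.
Unset Strict Implicit.

Local Open Scope R_scope.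

Definition vec (d : nat) := 'I_d -> R.

Definition sumI (d : nat) (f : 'I_d -> R) : R :=
  foldr (fun i acc => f i + acc) 0 (enum 'I_d).

Definition dot (d : nat) (a x : vec d) : R := sumI (fun i => a i * x i).

Definition ZtoR (d : nat) (z : 'I_d -> Z) : vec d := fun i => IZR (z i).

Definition sumR (l : list R) : R := fold_right Rplus 0 l.

Definition conv_hull (d : nat) (V : list (vec d)) (x : vec d) : Prop :=
  exists lam : list R,
    length lam = length V /\
    Forall (fun l => 0 <= l) lam /\
    sumR lam = 1 /\
    forall i : 'I_d,
      x i = sumR (map (fun p : R * vec d => fst p * snd p i) (combine lam V)).

Definition is_polytope (d : nat) (P : vec d -> Prop) : Prop :=
  exists V : list (vec d), forall x, P x <-> conv_hull V x.

Definition semi_rational (d : nat) (P : vec d -> Prop) : Prop :=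
  exists H : list (('I_d -> Z) * R),
    forall x, P x <-> Forall (fun h => dot (ZtoR (fst h)) x <= snd h) H.

(* P is full-dimensional: its affine hull is R^d, i.e. P contains d+1
   affinely independent points v0, v_0, ..., v_{d-1}
   (the vectors v_i - v0 are linearly independent). *)
Definition full_dimensional (d : nat) (P : vec d -> Prop) : Prop :=
  exists (v0 : vec d) (v : 'I_d -> vec d),
    P v0 /\ (forall i, P (v i)) /\
    forall c : 'I_d -> R,
      (forall j : 'I_d, sumI (fun i => c i * (v i j - v0 j)) = 0) ->
      forall i, c i = 0.

Definition dilate (d : nat) (s : R) (P : vec d -> Prop) : vec d -> Prop :=
  fun y => exists x, P x /\ forall i, y i = s * x i.

Definition translate (d : nat) (P : vec d -> Prop) (w : vec d) : vec d -> Prop :=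
  fun y => exists x, P x /\ forall i, y i = x i + w i.

Definition lattice_card (d : nat) (A : vec d -> Prop) (n : nat) : Prop :=
  exists l : list ('I_d -> Z),
    NoDup l /\ length l = n /\ forall z, In z l <-> A (ZtoR z).

Definition ehrhart_value (d : nat) (P : vec d -> Prop) (s : R) (n : nat) : Prop :=
  lattice_card (dilate s P) n.

(* If x lies in P but not in Q, then, P being a full-dimensional polyhedron and Q being
   closed, a small cube lies in P and misses Q, and this cube contains a point g = del k of
   the grid del Z^d. Translating by N k for a large integer N and dilating by 1 / (N + del)
   sends g to the lattice point k, and boundedness of P and Q makes k the only lattice
   point that a point of P or Q can reach. So that translate of P has exactly one lattice
   point at that dilation, hence so does the translate of Q, whose lattice point must then
   come from g: g lies in Q, a contradiction. Only the half-space descriptions of P and Q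
   are used, not the integrality of their normals. *)

From mathcomp Require Import ssreflect ssrfun ssrbool eqtype ssrnat seq fintype.
From Stdlib Require Import Reals ZArith List Lra Lia Classical FunctionalExtensionality.
From mathcomp Require bigop ssralg matrix mxalgebra Rstruct.

Set Implicit Arguments.
Unset Strict Implicit.
Local Open Scope R_scope.

Module SquareMatrix.
Import bigop ssralg matrix mxalgebra Rstruct.
Import GRing.Theory.
Local Open Scope ring_scope.

Lemma sumI_big d (f : 'I_d -> R) : sumI f = \sum_(i < d) f i.
Proof.
rewrite /sumI -big_enum /=.
by elim: (enum 'I_d) => [|i s IH]; rewrite ?big_nil // big_cons -IH.
Qed.

Local Open Scope R_scope.
Lemma independent_rows_orthogonal_eq0 d (u : 'I_d -> vec d) (a : vec d) :
  (forall c : vec d, (forall j, sumI (fun i => c i * u i j) = 0) -> forall i, c i = 0) ->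
  (forall i, sumI (fun j => a j * u i j) = 0) -> forall j, a j = 0.
Proof.
move=> indep orth.
pose A : 'M[R]_d := \matrix_(i, j) u i j.
have unitA : A \in unitmx.
  rewrite -row_free_unit -kermx_eq0; apply/negPn/negP => /rowV0Pn [v /sub_kermxP vA].
  move/negP; apply; apply/eqP/matrixP => i0 i; rewrite (ord1 i0) mxE.
  rewrite (indep (fun i => v ord0 i)) // => j; rewrite sumI_big.
  move/matrixP: vA => /(_ ord0 j); rewrite !mxE; apply: etrans.
  by apply: eq_bigr => k _; rewrite mxE.
pose B : 'M[R]_(d, 1) := \col_j a j.
have AB0 : (A *m B = 0)%R.
  apply/matrixP => i k; rewrite !mxE; apply: etrans (orth i); rewrite sumI_big.
  by apply: eq_bigr => j _; rewrite !mxE mulrC.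
move=> j; have := mulKmx unitA B; rewrite AB0 mulmx0 => /matrixP /(_ j ord0).
by rewrite !mxE.
Qed.
End SquareMatrix.

Section Coordinates.
Context {d : nat}.
Implicit Types (f g : 'I_d -> R) (a x y : vec d).

Lemma sumI_add f g : sumI (fun i => f i + g i) = sumI f + sumI g.
Proof. by rewrite /sumI; elim: (enum 'I_d) => /= [|i s ->]; ring. Qed.

Lemma sumI_scal c f : sumI (fun i => c * f i) = c * sumI f.
Proof. by rewrite /sumI; elim: (enum 'I_d) => /= [|i s ->]; ring. Qed.

Lemma eq_sumI f g : f =1 g -> sumI f = sumI g.
Proof. by move=> fg; congr sumI; apply: functional_extensionality. Qed.

Lemma sumI_le f g : (forall i, f i <= g i) -> sumI f <= sumI g.
Proof.
move=> fg; rewrite /sumI; elim: (enum 'I_d) => /= [|i s IH]; first lra.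
by have := fg i; lra.
Qed.

Lemma sumI_nonneg f : (forall i, 0 <= f i) -> 0 <= sumI f.
Proof.
move=> f0; rewrite /sumI; elim: (enum 'I_d) => /= [|i s IH]; first lra.
by have := f0 i; lra.
Qed.

Lemma sumI_term_le f i : (forall j, 0 <= f j) -> f i <= sumI f.
Proof.
move=> f0; rewrite /sumI; have : i \in enum 'I_d by rewrite mem_enum.
have tail_nonneg s : 0 <= foldr (fun j acc => f j + acc) 0 s.
  by elim: s => /= [|j s IH]; [lra | have := f0 j; lra].
elim: (enum 'I_d) => //= j s IH; rewrite seq.in_cons => /orP [/eqP ->|/IH].
- by have := tail_nonneg s; lra.
- by have := f0 j; lra.
Qed.

Lemma sumI_abs_le f : Rabs (sumI f) <= sumI (fun i => Rabs (f i)).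
Proof.
rewrite /sumI; elim: (enum 'I_d) => /= [|i s IH]; first by rewrite Rabs_R0; lra.
by have := Rabs_triang (f i) (foldr (fun i acc => f i + acc) 0 s); lra.
Qed.

Lemma sumI_const b : sumI (fun _ : 'I_d => b) = INR d * b.
Proof.
rewrite /sumI -[in INR d](size_enum_ord d).
elim: (enum 'I_d) => [|i s IH]; first by rewrite /=; ring.
by rewrite [size _]/= S_INR Rmult_plus_distr_r -IH /=; ring.
Qed.

Lemma sumI_swap (F : 'I_d -> 'I_d -> R) :
  sumI (fun j => sumI (fun i => F i j)) = sumI (fun i => sumI (fun j => F i j)).
Proof.
have gen s : foldr (fun j acc => sumI (fun i => F i j) + acc) 0 s =
               sumI (fun i => foldr (fun j acc => F i j + acc) 0 s).
  by elim: s => /= [|j s ->]; [rewrite sumI_const; ring | rewrite -sumI_add].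
exact: gen.
Qed.

Definition norm1 a := sumI (fun i => Rabs (a i)).

Definition box (c : vec d) (r : R) (z : vec d) : Prop :=
  forall i, Rabs (z i - c i) <= r.

Lemma box_le c r r' z : r <= r' -> box c r z -> box c r' z.
Proof. by move=> rr' cz i; have := cz i; lra. Qed.

Lemma dot_lin a x y al be :
  dot a (fun i => al * x i + be * y i) = al * dot a x + be * dot a y.
Proof. by rewrite /dot -!sumI_scal -sumI_add; apply: eq_sumI => i; ring. Qed.

Lemma dot_zero a x : (forall i, a i = 0) -> dot a x = 0.
Proof.
move=> a0; rewrite /dot -(Rmult_0_l (sumI x)) -sumI_scal.
by apply: eq_sumI => i; rewrite a0; ring.
Qed.

Lemma dot_sub a x y : dot a y - dot a x = sumI (fun i => a i * (y i - x i)).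
Proof.
have -> : dot a y - dot a x = dot a y + -1 * dot a x by ring.
by rewrite /dot -sumI_scal -sumI_add; apply: eq_sumI => i; ring.
Qed.

Lemma dot_box a x y r : box x r y -> Rabs (dot a y - dot a x) <= norm1 a * r.
Proof.
move=> xy; rewrite dot_sub; apply: Rle_trans (sumI_abs_le _) _.
rewrite /norm1 Rmult_comm -sumI_scal.
apply: sumI_le => i; rewrite Rabs_mult Rmult_comm.
by apply: Rmult_le_compat_r; [apply: Rabs_pos | apply: xy].
Qed.

Lemma dot_continuous a x e : 0 < e ->
  exists r, 0 < r /\ forall y, box x r y -> Rabs (dot a y - dot a x) < e.
Proof.
move=> e0; have n0 : 0 <= norm1 a by apply: sumI_nonneg => i; apply: Rabs_pos.
exists (e / (norm1 a + 1)); split; first by apply: Rdiv_lt_0_compat; lra.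
have : norm1 a * (e / (norm1 a + 1)) + e / (norm1 a + 1) = e by field; lra.
have : 0 < e / (norm1 a + 1) by apply: Rdiv_lt_0_compat; lra.
by move=> r0 re y /(dot_box a); lra.
Qed.

End Coordinates.

Section Polyhedra.
Context {d : nat}.
Implicit Types (x y z c : vec d) (H : list (vec d * R)).

Definition polyhedron H x : Prop := Forall (fun h => dot h.1 x <= h.2) H.

Lemma semi_rational_polyhedron (P : vec d -> Prop) :
  semi_rational P -> exists H, forall x, P x <-> polyhedron H x.
Proof.
case=> H PH; exists (map (fun h => (ZtoR h.1, h.2)) H) => x.
by rewrite /polyhedron Forall_map; apply: PH.
Qed.

Lemma polyhedron_convex H x y t : 0 <= t <= 1 ->
  polyhedron H x -> polyhedron H y -> polyhedron H (fun i => (1 - t) * x i + t * y i).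
Proof.
rewrite /polyhedron !Forall_forall => -[t0 t1] Hx Hy h hH; rewrite dot_lin.
by have := Hx h hH; have := Hy h hH; nra.
Qed.

Definition barycenter (v0 : vec d) (v : 'I_d -> vec d) : vec d :=
  fun j => (v0 j + sumI (fun i => v i j)) / INR d.+1.

Lemma barycenter_slack v0 v a b :
  INR d.+1 * (b - dot a (barycenter v0 v)) =
  (b - dot a v0) + sumI (fun i => b - dot a (v i)).
Proof.
have d1 : INR d.+1 = INR d + 1 by rewrite S_INR.
have d0 := pos_INR d.
have -> : dot a (barycenter v0 v) = (dot a v0 + sumI (fun i => dot a (v i))) / INR d.+1.
  rewrite /dot /barycenter.
  transitivity (sumI (fun j => / INR d.+1 * (a j * v0 j + sumI (fun i => a j * v i j)))).
    by apply: eq_sumI => j; rewrite sumI_scal; field; lra.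
  by rewrite sumI_scal sumI_add (sumI_swap (fun i j => a j * v i j)) /Rdiv; ring.
have -> : sumI (fun i => b - dot a (v i)) = sumI (fun i => b + -1 * dot a (v i)).
  by apply: eq_sumI => i; ring.
by rewrite sumI_add sumI_scal sumI_const d1; field; lra.
Qed.

Lemma barycenter_strict v0 v a b :
  (forall c : vec d, (forall j, sumI (fun i => c i * (v i j - v0 j)) = 0) -> forall i, c i = 0) ->
  dot a v0 <= b -> (forall i, dot a (v i) <= b) ->
  (forall i, a i = 0) \/ dot a (barycenter v0 v) < b.
Proof.
move=> indep av0 av.
have [lt|ge] := Rlt_le_dec (dot a (barycenter v0 v)) b; [by right | left].
have slack_nonneg i : 0 <= b - dot a (v i) by have := av i; lra.
have slack0 : (b - dot a v0) + sumI (fun i => b - dot a (v i)) <= 0.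
  by rewrite -barycenter_slack; have := pos_INR d.+1; nra.
have S0 := sumI_nonneg slack_nonneg.
apply: (SquareMatrix.independent_rows_orthogonal_eq0 (u := fun i j => v i j - v0 j) indep) => i.
by rewrite -(dot_sub a v0 (v i)); have := sumI_term_le i slack_nonneg; have := av i; lra.
Qed.

Lemma box_Forall (X : Type) (S : X -> vec d -> Prop) (L : list X) c :
  (forall h, In h L -> exists r, 0 < r /\ forall z, box c r z -> S h z) ->
  exists r, 0 < r /\ forall z, box c r z -> Forall (fun h => S h z) L.
Proof.
elim: L => [|h L IH] hL; first by exists 1; split; [lra | constructor].
have [r [r0 hr]] := hL h (or_introl erefl).
have [r' [r'0 hr']] := IH (fun h' hh' => hL h' (or_intror hh')).
exists (Rmin r r'); split; first exact: Rmin_pos.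
move=> z cz; constructor; [apply: hr | apply: hr'];
  apply: box_le cz; [apply: Rmin_l | apply: Rmin_r].
Qed.

Lemma full_dimensional_polyhedron_box (P : vec d -> Prop) H :
  (forall x, P x <-> polyhedron H x) -> full_dimensional P ->
  exists c r, 0 < r /\ forall z, box c r z -> polyhedron H z.
Proof.
move=> PH [v0 [v [Pv0 [Pv indep]]]]; exists (barycenter v0 v).
apply: (@box_Forall _ (fun h z => dot h.1 z <= h.2)) => -[a b] hH /=.
have inH y : P y -> dot a y <= b.
  by move=> /PH; rewrite /polyhedron Forall_forall => /(_ _ hH).
case: (barycenter_strict indep (inH _ Pv0) (fun i => inH _ (Pv i))) => [a0 | lt].
  exists 1; split => [|z _]; first lra.
  by have := inH _ Pv0; rewrite !dot_zero.
have [r [r0 near]] := dot_continuous a (barycenter v0 v) (proj2 (Rlt_0_minus _ _) lt).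
by exists r; split => // z /near /Rabs_def2; lra.
Qed.

Lemma polyhedron_box_segment H c r x t : 0 < t <= 1 ->
  (forall z, box c r z -> polyhedron H z) -> polyhedron H x ->
  forall z, box (fun i => (1 - t) * x i + t * c i) (t * r) z -> polyhedron H z.
Proof.
move=> [t0 t1] boxc Hx z zy.
pose w i := c i + (z i - ((1 - t) * x i + t * c i)) / t.
have -> : z = fun i => (1 - t) * x i + t * w i.
  by apply: functional_extensionality => i; rewrite /w; field; lra.
apply: polyhedron_convex Hx (boxc w _); first lra.
move=> i; rewrite /w; have /= := zy i.
set D := z i - _ => Dtr; have -> : c i + D / t - c i = D * / t by rewrite /Rdiv; ring.
rewrite Rabs_mult Rabs_inv (Rabs_pos_eq t); last lra.
apply: (Rmult_le_reg_r t) => //; rewrite Rmult_assoc Rinv_l; lra.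
Qed.

Lemma polyhedron_diff_box HP HQ c rc x :
  0 < rc -> (forall z, box c rc z -> polyhedron HP z) ->
  polyhedron HP x -> ~ polyhedron HQ x ->
  exists y r, 0 < r /\ forall z, box y r z -> polyhedron HP z /\ ~ polyhedron HQ z.
Proof.
move=> rc0 boxc Px nQx.
have [[a b] [hQ /= bx]] : exists h, In h HQ /\ h.2 < dot h.1 x.
  apply: NNPP => none; apply: nQx; apply/Forall_forall => h hh.
  by apply: Rnot_lt_le => lt; apply: none; exists h.
have [rq [rq0 nearx]] := dot_continuous a x (proj2 (Rlt_0_minus _ _) bx).
have outQ z : box x rq z -> ~ polyhedron HQ z.
  move=> /nearx /Rabs_def2 near; rewrite /polyhedron Forall_forall => /(_ _ hQ) /=.
  lra.
pose D := norm1 (fun i => c i - x i).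
have D0 : 0 <= D by apply: sumI_nonneg => i; apply: Rabs_pos.
pose t := Rmin 1 (rq / (2 * (D + 1))).
have t0 : 0 < t by apply: Rmin_pos; [lra | apply: Rdiv_lt_0_compat; lra].
have t1 : t <= 1 by apply: Rmin_l.
have tD : t * D <= rq / 2.
  have : t <= rq / (2 * (D + 1)) by apply: Rmin_r.
  have : rq / (2 * (D + 1)) * (D + 1) = rq / 2 by field; lra.
  by nra.
exists (fun i => (1 - t) * x i + t * c i), (Rmin (t * rc) (rq / 2)); split.
  by apply: Rmin_pos; [apply: Rmult_lt_0_compat | lra].
move=> z zy; split.
  by apply: (polyhedron_box_segment (conj t0 t1) boxc Px); apply: box_le zy; apply: Rmin_l.
apply: outQ => i.
have cx : Rabs (c i - x i) <= D.
  exact: (sumI_term_le (f := fun j => Rabs (c j - x j)) i (fun j => Rabs_pos _)).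
have := zy i; have := Rmin_r (t * rc) (rq / 2).
have := Rmult_le_compat_l t _ _ (Rlt_le _ _ t0) cx.
have := Rabs_triang (z i - ((1 - t) * x i + t * c i)) (t * (c i - x i)).
have -> : z i - ((1 - t) * x i + t * c i) + t * (c i - x i) = z i - x i by ring.
rewrite Rabs_mult (Rabs_pos_eq t); lra.
Qed.

Lemma box_grid_point y r : 0 < r -> exists k : 'I_d -> Z, box y r (fun i => r * IZR (k i)).
Proof.
move=> r0; exists (fun i => (up (y i / r) - 1)%Z) => i /=.
move: (archimed (y i / r)); set u := y i / r => -[hi lo].
have -> : y i = r * u by rewrite /u; field; lra.
by rewrite minus_IZR; apply: Rabs_le; nra.
Qed.

End Polyhedra.

Section LatticeCounting.
Context {d : nat}.

Definition bounded_by (P : vec d -> Prop) (B : R) : Prop :=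
  forall x, P x -> forall i, Rabs (x i) <= B.

Lemma finite_upper_bound (X : Type) (L : list X) (f : X -> R) :
  exists K, forall h, In h L -> f h <= K.
Proof.
elim: L => [|h L [K HK]]; first by exists 0.
exists (Rmax (f h) K) => h' [<-|hL]; first exact: Rmax_l.
by apply: Rle_trans (HK _ hL) (Rmax_r _ _).
Qed.

Lemma conv_hull_bounded (V : list (vec d)) B :
  (forall p, In p V -> forall i, Rabs (p i) <= B) -> bounded_by (conv_hull V) B.
Proof.
move=> VB x [lam [len [nn [s1 xV]]]] i; rewrite xV -[B]Rmult_1_r -s1 {s1 xV}.
elim: V lam len nn VB => [|p V IH] [|l lam] //= len nn VB.
  by rewrite Rabs_R0; lra.
case/Forall_cons_iff: nn => l0 nn.
have := IH lam (eq_add_S _ _ len) nn (fun q qV => VB q (or_intror qV)).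
have := Rmult_le_compat_l l _ _ l0 (VB p (or_introl erefl) i).
have := Rabs_triang (l * p i) (sumR (map (fun p : R * vec d => p.1 * p.2 i) (combine lam V))).
rewrite Rabs_mult (Rabs_pos_eq l l0) /sumR /=; lra.
Qed.

Lemma polytope_bounded (P : vec d -> Prop) : is_polytope P -> exists B, bounded_by P B.
Proof.
case=> V PV; have [B VB] := finite_upper_bound V norm1.
exists B => x /PV; apply: conv_hull_bounded => p pV i; apply: Rle_trans (VB p pV).
exact: (sumI_term_le (f := fun j => Rabs (p j)) i (fun j => Rabs_pos _)).
Qed.

Lemma lattice_card_singleton (A : vec d -> Prop) k :
  (forall z, A (ZtoR z) <-> z = k) -> lattice_card A 1.
Proof.
move=> Ak; exists [:: k]; split; first by constructor; [case | constructor].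
by split=> // z; split => [[<- | []] | /Ak ->]; [apply/Ak | left].
Qed.

Lemma lattice_card_exists (A : vec d -> Prop) n :
  lattice_card A n -> (0 < n)%nat -> exists z, A (ZtoR z).
Proof. by case=> [[|z l] [_ [<- lA]]] // _; exists z; apply/lA; left. Qed.

Lemma dilated_coordinate_eq B N del xi zi ki :
  0 < del -> 2 * B < IZR N + del -> Rabs xi <= B -> Rabs (del * IZR ki) <= B ->
  IZR zi * (IZR N + del) = xi + IZR N * IZR ki -> zi = ki /\ xi = del * IZR ki.
Proof.
move=> del0 NB xB kB eq.
have B0 : 0 <= B by apply: Rle_trans (Rabs_pos xi) xB.
have diff : (IZR N + del) * IZR (zi - ki) = xi - del * IZR ki.
  by rewrite minus_IZR; lra.
have small : Rabs (IZR (zi - ki)) < 1.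
  have := Rabs_triang xi (- (del * IZR ki)); rewrite Rabs_Ropp -/(Rminus _ _) -diff.
  rewrite Rabs_mult (Rabs_pos_eq (IZR N + del)); last lra.
  by nra.
have [lo hi] := Rabs_def2 _ _ small.
have zk : zi = ki.
  have : (-1 < zi - ki)%Z by apply: lt_IZR; lra.
  have : (zi - ki < 1)%Z by apply: lt_IZR; lra.
  lia.
by split => //; rewrite zk in eq; lra.
Qed.

Definition ehrhart_equivalent (P Q : vec d -> Prop) : Prop :=
  forall (w : 'I_d -> Z) (s : R), 0 < s -> forall n : nat,
    ehrhart_value (translate P (ZtoR w)) s n <-> ehrhart_value (translate Q (ZtoR w)) s n.

(* Translating by [N k] and dilating by [1 / (N + del)] sends [del k] to the lattice
   point [k]; as [N + del] exceeds the diameter bound [2 B], no other lattice point of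
   the dilate can come from a point of [P] or [Q]. *)
Lemma ehrhart_grid_point P Q B del (k : 'I_d -> Z) :
  0 < del -> bounded_by P B -> bounded_by Q B -> ehrhart_equivalent P Q ->
  P (fun i => del * IZR (k i)) -> Q (fun i => del * IZR (k i)).
Proof.
move=> del0 PB QB PQ Pg; set g := fun i => _ in Pg *.
(* [Rabs B]: for [d = 0] the bound [B] may be negative. *)
pose N := up (2 * Rabs B); pose M := IZR N + del.
have [NB M0] : 2 * B < M /\ 0 < M.
  have := proj1 (archimed (2 * Rabs B)); have := Rle_abs B; have := Rabs_pos B.
  rewrite /M -/N; lra.
pose w i := (N * k i)%Z.
have preimage (S : vec d -> Prop) z : bounded_by S B ->
    dilate (/ M) (translate S (ZtoR w)) (ZtoR z) -> exists x, S x /\ z = k /\ x = g.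
  move=> SB [y [[x [Sx yx]] zy]].
  have eqM i : IZR (z i) * M = x i + IZR N * IZR (k i).
    move: (zy i) (yx i); rewrite /ZtoR /w mult_IZR => ->  ->.
    by field; lra.
  have coord i := dilated_coordinate_eq del0 NB (SB x Sx i) (PB g Pg i) (eqM i).
  exists x; split => //; split; apply: functional_extensionality => i; apply coord.
have single : ehrhart_value (translate P (ZtoR w)) (/ M) 1.
  apply: (lattice_card_singleton (k := k)) => z.
  split => [/(preimage P z PB) [x [_ [-> _]]] // | ->].
  exists (fun i => M * IZR (k i)); split => [|i]; last by rewrite /ZtoR; field; lra.
  by exists g; split => // i; rewrite /ZtoR /w mult_IZR /g /M; ring.
have [z Qz] : exists z, dilate (/ M) (translate Q (ZtoR w)) (ZtoR z).
  apply: (lattice_card_exists (n := 1%nat)) => //.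
  by apply/(PQ w (/ M) (Rinv_0_lt_compat _ M0)).
by have [x [Qx [_ <-]]] := preimage Q z QB Qz.
Qed.

End LatticeCounting.

Lemma ehrhart_equivalent_subset d (P Q : vec d -> Prop) :
  is_polytope P -> semi_rational P -> full_dimensional P ->
  is_polytope Q -> semi_rational Q -> ehrhart_equivalent P Q ->
  forall x, P x -> Q x.
Proof.
move=> polP /semi_rational_polyhedron [HP PH] fdP polQ /semi_rational_polyhedron [HQ QH] PQ.
move=> x Px; apply: NNPP => nQx.
have [c [rc [rc0 boxc]]] := full_dimensional_polyhedron_box PH fdP.
have [y [r [r0 diff]]] :=
  polyhedron_diff_box rc0 boxc (proj1 (PH x) Px) (fun Qx => nQx (proj2 (QH x) Qx)).
have [k yk] := box_grid_point y r0.
have [Pk nQk] := diff _ yk; apply/nQk/QH.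
have [BP PB] := polytope_bounded polP; have [BQ QB] := polytope_bounded polQ.
apply: (ehrhart_grid_point (B := Rmax BP BQ) r0 _ _ PQ); last exact/PH.
- by move=> z /PB zB i; apply: Rle_trans (zB i) (Rmax_l _ _).
- by move=> z /QB zB i; apply: Rle_trans (zB i) (Rmax_r _ _).
Qed.

Theorem corollary3p6 (d : nat) (P Q : vec d -> Prop) :
  is_polytope P -> semi_rational P -> full_dimensional P ->
  is_polytope Q -> semi_rational Q -> full_dimensional Q ->
  (forall (w : 'I_d -> Z) (s : R), (0 < s)%R ->
     forall n : nat,
       ehrhart_value (translate P (ZtoR w)) s n <->
       ehrhart_value (translate Q (ZtoR w)) s n) ->
  forall x : vec d, P x <-> Q x.
Proof.
move=> polP srP fdP polQ srQ fdQ PQ x; split.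
- exact: ehrhart_equivalent_subset polP srP fdP polQ srQ PQ x.
- apply: ehrhart_equivalent_subset polQ srQ fdQ polP srP _ x => w s s0 n.
  exact: iff_sym (PQ w s s0 n).
Qed.
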